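(* Let $A$ be a $p$-torsion free ring with a ring endomorphism $\phi:A\to A$ satisfying $\phi(a)\equiv a^p\pmod{pA}$ for all $a\in A$, and let $n\ge1$. Regard $W_n(A)$ as an $A$-module via $s_\phi$. Then the map \[ \Psi_n:W_n(A)\to A\oplus\phi_*A\oplus\cdots\oplus\phi^{n-1}_*A, \] \[ (a_0,\dots,a_{n-1})\mapsto\Big(a_0,\ \Delta_1(a_0)+a_1,\ \dots,\ \Delta_{n-1}(a_0)+\Delta_{n-2}(a_1)+\cdots+\Delta_1(a_{n-2})+a_{n-1}\Big) \] is an isomorphism of $A$-modules.
   Context: $W(A)$, $W_n(A)$ are the rings of $p$-typical Witt vectors (of length $n$), with Teichmüller lift $[a]$, Verschiebung $V$ and ghost components $\varphi_m(a_0,a_1,\dots)=\sum_{i=0}^m p^ia_i^{p^{m-i}}$. There is a unique ring map $s_\phi:A\to W(A)$ with $\varphi_m(s_\phi(a))=\phi^m(a)$ for all $m$; its composite with the restriction $W(A)\to W_n(A)$ is also denoted $s_\phi$. Define $\Delta_{W_n}:W_n(A)\to W_{n-1}(A)$ by $V\Delta_{W_n}(\alpha)=\alpha-s_\phi(a_0)$ for $\alpha=(a_0,\dots,a_{n-1})$. For $a\in A$ set $\Delta_0(a)=a$ and, for $s\ge1$, $\Delta_s(a)=\Delta_{W_2}\circ\Delta_{W_3}\circ\cdots\circ\Delta_{W_{s+1}}([a])\in A=W_1(A)$. $\phi^j_*A$ denotes $A$ regarded as an $A$-module via $\phi^j$. *)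

From HB Require Import structures.
From mathcomp Require Import all_boot all_order all_algebra.
From Stdlib Require Import ClassicalEpsilon.
Set Implicit Arguments. Unset Strict Implicit. Unset Printing Implicit Defensive.
Import GRing.Theory.
Local Open Scope ring_scope.

(* Infinite Witt vectors are sequences nat -> A; W_n(A) is {ffun 'I_n -> A}.
   Ring operations are defined through ghost components: for p-torsion free
   A the ghost map is injective, and the m-th component of the result is the
   unique y with p^m y = (target ghost_m) - sum_{i<m} p^i a_i^{p^(m-i)}. *)
Section Witt.
Variables (A : comPzRingType) (p : nat) (phi : {rmorphism A -> A}).

Definition ghost (a : nat -> A) (m : nat) : A :=
  \sum_(i < m.+1) (p%:R ^+ i) * (a i) ^+ (p ^ (m - i)).

(* a chosen y with x = p^k * y (if any; unique when A is p-torsion free) *)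
Definition pdivk (k : nat) (x : A) : A :=
  epsilon (inhabits 0) (fun y => x = p%:R ^+ k * y).

(* first m+1 components of the Witt vector with ghost components w *)
Fixpoint fg_seq (w : nat -> A) (m : nat) : seq A :=
  match m with
  | 0 => [:: pdivk 0 (w 0%N)]
  | m'.+1 => let s := fg_seq w m' in
      rcons s (pdivk m'.+1 (w m'.+1 -
        \sum_(i < m'.+1) (p%:R ^+ i) * (nth 0 s i) ^+ (p ^ (m'.+1 - i))))
  end.

Definition from_ghost (w : nat -> A) : nat -> A := fun m => nth 0 (fg_seq w m) m.

Definition wadd (a b : nat -> A) := from_ghost (fun m => ghost a m + ghost b m).
Definition wsub (a b : nat -> A) := from_ghost (fun m => ghost a m - ghost b m).
Definition wmul (a b : nat -> A) := from_ghost (fun m => ghost a m * ghost b m).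

Definition teich (a : A) : nat -> A := fun i => if i == 0%N then a else 0.
Definition sphi (a : A) : nat -> A := from_ghost (fun m => iter m phi a).

Definition W (n : nat) := {ffun 'I_n -> A}.
Definition tr (n : nat) (a : nat -> A) : W n := [ffun i : 'I_n => a (nat_of_ord i)].
Definition ext (n : nat) (x : W n) : nat -> A :=
  fun i => if insub i is Some j then x j else 0.

Definition waddn n (x y : W n) : W n := tr n (wadd (ext x) (ext y)).
Definition wmuln n (x y : W n) : W n := tr n (wmul (ext x) (ext y)).
Definition sphin n (a : A) : W n := tr n (sphi a).
Definition teichn n (a : A) : W n := tr n (teich a).

(* Delta_{W_{n+1}} : W_{n+1}(A) -> W_n(A), characterized by
   V (Delta alpha) = alpha - s_phi(a_0); V shifts components by one, so
   Delta alpha is the tail (components 1..n) of alpha - s_phi(a_0). *)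
Definition DeltaW (n : nat) (x : W n.+1) : W n :=
  [ffun i : 'I_n => wsub (ext x) (sphi (x ord0)) i.+1].

Fixpoint Dchain (s : nat) : W s.+1 -> W 1 :=
  match s return W s.+1 -> W 1 with
  | 0 => fun x => x
  | s'.+1 => fun x => @Dchain s' (@DeltaW s'.+1 x)
  end.

Definition Delta (s : nat) (a : A) : A := @Dchain s (teichn s.+1 a) ord0.

Definition Psi (n : nat) (x : W n) : {ffun 'I_n -> A} :=
  [ffun j : 'I_n => \sum_(i < j.+1) Delta (j - i) (ext x i)].

End Witt.

From HB Require Import structures.
From mathcomp Require Import all_boot all_order all_algebra.
From Stdlib Require Import ClassicalEpsilon.
Set Implicit Arguments. Unset Strict Implicit. Unset Printing Implicit Defensive.
Import GRing.Theory.
Local Open Scope ring_scope.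

(* Compare both sides through ghost components.  Put
     tghost c m = sum_(k <= m) p^k phi^(m-k)(c_k).
   Unwinding V in the definition of Delta gives ghost([a]) = tghost(Delta_.(a)),
   and summing over the components yields ghost(x) = tghost(Psi x).  Both
   ghost and tghost are triangular with diagonal p^m, hence injective on a
   p-torsion free ring; tghost is additive and multiplies its m-th component
   by phi^m(a) when c_k is replaced by phi^k(a) c_k, which is what s_phi(a)
   does to ghost components.  Finally every tghost c satisfies the Dwork
   congruences w_(m+1) = phi(w_m) mod p^(m+1), and every such sequence is the
   ghost vector of a Witt vector; this gives surjectivity. *)

Section PsiIsomorphism.
Variables (A : comPzRingType) (p : nat) (phi : {rmorphism A -> A}).
Hypothesis p_gt0 : (0 < p)%N.
Hypothesis p_torsionfree : forall a : A, p%:R * a = 0 -> a = 0.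
Hypothesis phi_frobenius : forall a : A, exists b : A, phi a - a ^+ p = p%:R * b.

Local Notation P := (p%:R : A).
Local Notation ghost := (ghost p).
Implicit Types (f g c w : nat -> A) (a x y : A).

(** * Divisibility by powers of p *)

Definition pdvd (k : nat) x := exists t, x = P ^+ k * t.

Lemma pdvd0 k : pdvd k 0. Proof. by exists 0; rewrite mulr0. Qed.

Lemma pdvd_pX k t : pdvd k (P ^+ k * t). Proof. by exists t. Qed.

Lemma pdvdD k x y : pdvd k x -> pdvd k y -> pdvd k (x + y).
Proof. by move=> [t ->] [u ->]; exists (t + u); rewrite mulrDr. Qed.

Lemma pdvdN k x : pdvd k x -> pdvd k (- x).
Proof. by move=> [t ->]; exists (- t); rewrite mulrN. Qed.

Lemma pdvdMl k x y : pdvd k y -> pdvd k (x * y).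
Proof. by move=> [t ->]; exists (x * t); rewrite mulrCA. Qed.

Lemma pdvdMr k x y : pdvd k x -> pdvd k (x * y).
Proof. by rewrite mulrC; apply: pdvdMl. Qed.

Lemma pdvdM k l x y : pdvd k x -> pdvd l y -> pdvd (k + l) (x * y).
Proof. by move=> [t ->] [u ->]; exists (t * u); rewrite exprD mulrACA. Qed.

Lemma pdvdW k l x : (l <= k)%N -> pdvd k x -> pdvd l x.
Proof.
by move=> lk [t ->]; exists (P ^+ (k - l) * t); rewrite mulrA -exprD subnKC.
Qed.

Lemma pdvd_sum k n (F : 'I_n -> A) :
  (forall i, pdvd k (F i)) -> pdvd k (\sum_(i < n) F i).
Proof. by move=> hF; elim/big_ind: _ => //; [apply: pdvd0 | apply: pdvdD]. Qed.

Lemma pdvd_subX k x y : (0 < k)%N ->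
  pdvd k (x - y) -> pdvd k.+1 (x ^+ p - y ^+ p).
Proof.
move=> k_gt0 dxy; rewrite subrXX -addn1; apply: pdvdM => //.
(* as x = y mod p, the cofactor sum_(i < p) x^(p-1-i) y^i is p y^(p-1) mod p *)
have -> : \sum_(i < p) x ^+ (p.-1 - i) * y ^+ i =
    \sum_(i < p) (x ^+ (p.-1 - i) - y ^+ (p.-1 - i)) * y ^+ i
    + \sum_(i < p) y ^+ p.-1.
  rewrite -big_split; apply: eq_bigr => i _ /=.
  by rewrite mulrBl -exprD subnK ?subrK // -ltnS prednK.
apply: pdvdD; last first.
  by rewrite sumr_const card_ord -mulr_natl; exists (y ^+ p.-1); rewrite expr1.
apply: pdvd_sum => i; apply: pdvdMr.
by rewrite subrXX; apply: pdvdMr; apply: pdvdW dxy.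
Qed.

Lemma pdvd_subXpn j x y :
  pdvd 1 (x - y) -> pdvd j.+1 (x ^+ (p ^ j) - y ^+ (p ^ j)).
Proof.
move=> dxy; elim: j => [|j IH]; first by rewrite expn0 !expr1.
by rewrite expnSr !exprM; apply: pdvd_subX.
Qed.

Lemma lreg_pX k : GRing.lreg (P ^+ k).
Proof.
apply: lregX => a b /eqP; rewrite -subr_eq0 -mulrBr => /eqP/p_torsionfree/eqP.
by rewrite subr_eq0 => /eqP.
Qed.

Lemma pdivk_pX k y : pdivk p k (P ^+ k * y) = y.
Proof.
apply/(@lreg_pX k)/esym.
by apply: (epsilon_spec _ (fun z => P ^+ k * y = P ^+ k * z)); exists y.
Qed.

Lemma triangular_inj (T : nat -> nat -> A -> A) N c c' :
  (forall m x, T m m x = P ^+ m * x) ->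
  (forall m, (m < N)%N ->
     \sum_(k < m.+1) T m k (c k) = \sum_(k < m.+1) T m k (c' k)) ->
  forall k, (k < N)%N -> c k = c' k.
Proof.
move=> Tdiag eqT; elim/ltn_ind => k IH kN.
have := eqT k kN; rewrite !big_ord_recr /= !Tdiag.
rewrite (eq_bigr (fun i : 'I_k => T k i (c' i))) => [/addrI/lreg_pX //|i _].
by rewrite IH // (ltn_trans _ kN).
Qed.

(** * Ghost components and Dwork sequences *)

Lemma ghost0 f : ghost f 0 = f 0%N.
Proof. by rewrite /ghost big_ord1 expr0 mul1r subnn expn0 expr1. Qed.

Lemma ghost_recr f m : ghost f m.+1 =
  \sum_(i < m.+1) P ^+ i * f i ^+ (p ^ (m.+1 - i)) + P ^+ m.+1 * f m.+1.
Proof. by rewrite /ghost big_ord_recr /= subnn expn0 expr1. Qed.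

Lemma ghost_recl f m :
  ghost f m.+1 = f 0%N ^+ (p ^ m.+1) + P * ghost (fun i => f i.+1) m.
Proof.
rewrite /ghost big_ord_recl expr0 mul1r subn0 mulr_sumr; congr (_ + _).
by apply: eq_bigr => i _; rewrite exprS mulrA.
Qed.

Lemma eq_ghost f g m :
  (forall i, (i <= m)%N -> f i = g i) -> ghost f m = ghost g m.
Proof. by move=> efg; apply: eq_bigr => i _; rewrite efg // -ltnS. Qed.

Lemma ghost_inj N f g : (forall m, (m < N)%N -> ghost f m = ghost g m) ->
  forall k, (k < N)%N -> f k = g k.
Proof.
apply: (triangular_inj (T := fun m k x => P ^+ k * x ^+ (p ^ (m - k)))).
by move=> m x; rewrite subnn expn0 expr1.
Qed.

Definition dwork w := forall m, pdvd m.+1 (w m.+1 - phi (w m)).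

Lemma dworkD w w' : dwork w -> dwork w' -> dwork (fun m => w m + w' m).
Proof. by move=> dw dw' m; rewrite rmorphD opprD addrACA; apply: pdvdD. Qed.

Lemma dworkN w : dwork w -> dwork (fun m => - w m).
Proof. by move=> dw m; rewrite rmorphN opprK addrC -opprB; apply: pdvdN. Qed.

Lemma dworkB w w' : dwork w -> dwork w' -> dwork (fun m => w m - w' m).
Proof. by move=> dw /dworkN; apply: dworkD. Qed.

Lemma dworkM w w' : dwork w -> dwork w' -> dwork (fun m => w m * w' m).
Proof.
move=> dw dw' m; rewrite rmorphM.
have -> : w m.+1 * w' m.+1 - phi (w m) * phi (w' m) =
    (w m.+1 - phi (w m)) * w' m.+1 + phi (w m) * (w' m.+1 - phi (w' m)).
  by rewrite mulrBl mulrBr addrA subrK.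
by apply: pdvdD; [apply: pdvdMr | apply: pdvdMl].
Qed.

Lemma dwork_iter a : dwork (fun m => iter m phi a).
Proof. by move=> m; rewrite subrr; apply: pdvd0. Qed.

Lemma pdvd_phi_ghost f m :
  pdvd m.+1 (phi (ghost f m) - \sum_(i < m.+1) P ^+ i * f i ^+ (p ^ (m.+1 - i))).
Proof.
rewrite rmorph_sum -sumrB; apply: pdvd_sum => i.
have le_im : (i <= m)%N by rewrite -ltnS.
rewrite rmorphM rmorphXn rmorph_nat rmorphXn -mulrBr subSn // expnS exprM.
apply: (@pdvdW (i + (m - i).+1)); first by rewrite addnS subnKC.
apply: pdvdM; first by exists 1; rewrite mulr1.
apply: pdvd_subXpn; have [b ->] := phi_frobenius (f i).
exact: pdvd_pX.
Qed.

Lemma dwork_ghost f : dwork (ghost f).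
Proof.
move=> m; rewrite ghost_recr addrAC -opprB; apply: pdvdD; last exact: pdvd_pX.
by apply: pdvdN; apply: pdvd_phi_ghost.
Qed.

Lemma size_fg_seq w m : size (fg_seq p w m) = m.+1.
Proof. by elim: m => //= m IH; rewrite size_rcons IH. Qed.

Lemma nth_fg_seq w m i : (i <= m)%N -> nth 0 (fg_seq p w m) i = from_ghost p w i.
Proof.
elim: m => [|m IH]; first by rewrite leqn0 => /eqP ->.
rewrite leq_eqVlt => /orP [/eqP -> //|]; rewrite ltnS => le_im.
by rewrite /= nth_rcons size_fg_seq ltnS le_im IH.
Qed.

Lemma from_ghostS w m : from_ghost p w m.+1 = pdivk p m.+1
  (w m.+1 - \sum_(i < m.+1) P ^+ i * from_ghost p w i ^+ (p ^ (m.+1 - i))).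
Proof.
rewrite {1}/from_ghost /= nth_rcons size_fg_seq ltnn eqxx.
by congr (pdivk _ _ (_ - _)); apply: eq_bigr => i _; rewrite nth_fg_seq // -ltnS.
Qed.

Lemma ghost_from_ghost w : dwork w -> forall m, ghost (from_ghost p w) m = w m.
Proof.
move=> dw; elim=> [|m IH].
  by rewrite ghost0 /from_ghost /= -{1}[w 0%N]mul1r -(expr0 P) pdivk_pX.
rewrite ghost_recr from_ghostS; set s := \sum_(i < m.+1) _.
have [t def_t] : pdvd m.+1 (w m.+1 - s).
  rewrite -(subrK (phi (w m)) (w m.+1)) -addrA.
  by apply: pdvdD; [apply: dw | rewrite -IH; apply: pdvd_phi_ghost].
by rewrite def_t pdivk_pX -def_t addrC subrK.
Qed.

Lemma ghost_wadd f g m : ghost (wadd p f g) m = ghost f m + ghost g m.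
Proof. by rewrite ghost_from_ghost //; apply: dworkD; apply: dwork_ghost. Qed.

Lemma ghost_wsub f g m : ghost (wsub p f g) m = ghost f m - ghost g m.
Proof. by rewrite ghost_from_ghost //; apply: dworkB; apply: dwork_ghost. Qed.

Lemma ghost_wmul f g m : ghost (wmul p f g) m = ghost f m * ghost g m.
Proof. by rewrite ghost_from_ghost //; apply: dworkM; apply: dwork_ghost. Qed.

Lemma ghost_sphi a m : ghost (sphi p phi a) m = iter m phi a.
Proof. by rewrite ghost_from_ghost //; apply: dwork_iter. Qed.

Lemma ghost_teich a m : ghost (teich a) m = a ^+ (p ^ m).
Proof.
rewrite /ghost big_ord_recl /= expr0 mul1r subn0 big1 ?addr0 // => i _.
by rewrite expr0n expn_eq0 eqn0Ngt p_gt0 mulr0.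
Qed.

Lemma extE n (x : W A n) i (lt_in : (i < n)%N) : ext x i = x (Ordinal lt_in).
Proof. by rewrite /ext insubT. Qed.

Lemma ext_ord n (x : W A n) (i : 'I_n) : ext x i = x i.
Proof. by rewrite (extE x (ltn_ord i)); congr (x _); apply: val_inj. Qed.

Lemma ext0 n (x : W A n.+1) : ext x 0 = x ord0.
Proof. exact: (ext_ord x ord0). Qed.

Lemma ext_tr n f i : (i < n)%N -> ext (tr n f) i = f i.
Proof. by move=> lt_in; rewrite (extE _ lt_in) ffunE. Qed.

Lemma ghost_ext_tr n f m : (m < n)%N -> ghost (ext (tr n f)) m = ghost f m.
Proof.
move=> lt_mn; apply: eq_ghost => i le_im.
by rewrite ext_tr // (leq_ltn_trans _ lt_mn).
Qed.

(** * The twisted ghost map *)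

Lemma iter_phiD k x y : iter k phi (x + y) = iter k phi x + iter k phi y.
Proof. by elim: k => //= k ->; rewrite rmorphD. Qed.

Lemma iter_phiM k x y : iter k phi (x * y) = iter k phi x * iter k phi y.
Proof. by elim: k => //= k ->; rewrite rmorphM. Qed.

Definition tghost c m := \sum_(k < m.+1) P ^+ k * iter (m - k) phi (c k).

Lemma tghost0 c : tghost c 0 = c 0%N.
Proof. by rewrite /tghost big_ord1 mul1r. Qed.

Lemma tghost_recl c m :
  tghost c m.+1 = iter m.+1 phi (c 0%N) + P * tghost (fun k => c k.+1) m.
Proof.
rewrite /tghost big_ord_recl /= expr0 mul1r mulr_sumr; congr (_ + _).
by apply: eq_bigr => i _; rewrite exprS mulrA.
Qed.

Lemma tghost_recr c m : tghost c m.+1 = phi (tghost c m) + P ^+ m.+1 * c m.+1.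
Proof.
rewrite /tghost big_ord_recr /= subnn rmorph_sum; congr (_ + _).
apply: eq_bigr => i _; rewrite rmorphM rmorphXn rmorph_nat.
by rewrite subSn // -ltnS.
Qed.

Lemma tghostD c c' m : tghost (fun k => c k + c' k) m = tghost c m + tghost c' m.
Proof.
by rewrite /tghost -big_split; apply: eq_bigr => k _; rewrite iter_phiD mulrDr.
Qed.

Lemma tghost_scale a c m :
  tghost (fun k => iter k phi a * c k) m = iter m phi a * tghost c m.
Proof.
rewrite /tghost mulr_sumr; apply: eq_bigr => k _.
by rewrite iter_phiM -iterD subnK 1?mulrCA // -ltnS.
Qed.

Lemma eq_tghost c c' m :
  (forall k, (k <= m)%N -> c k = c' k) -> tghost c m = tghost c' m.
Proof. by move=> ecc'; apply: eq_bigr => k _; rewrite ecc' // -ltnS. Qed.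

Lemma tghost_inj N c c' : (forall m, (m < N)%N -> tghost c m = tghost c' m) ->
  forall k, (k < N)%N -> c k = c' k.
Proof.
apply: (triangular_inj (T := fun m k x => P ^+ k * iter (m - k) phi x)).
by move=> m x; rewrite subnn.
Qed.

Lemma dwork_tghost c : dwork (tghost c).
Proof. by move=> m; rewrite tghost_recr addrC addKr; apply: pdvd_pX. Qed.

(** * The maps Delta_s and Psi *)

Lemma ghost_DeltaW n (x : W A n.+1) m : (m < n)%N ->
  P * ghost (ext (DeltaW p phi x)) m
    = ghost (ext x) m.+1 - iter m.+1 phi (x ord0).
Proof.
move=> lt_mn; set z := wsub p (ext x) (sphi p phi (x ord0)).
have z0 : z 0%N = 0 by rewrite -ghost0 ghost_wsub ghost_sphi ghost0 ext0 subrr.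
have -> : ghost (ext (DeltaW p phi x)) m = ghost (fun i => z i.+1) m.
  apply: eq_ghost => i le_im; have lt_in := leq_ltn_trans le_im lt_mn.
  by rewrite (extE _ lt_in) ffunE.
rewrite -ghost_sphi -ghost_wsub -/z ghost_recl z0 expr0n expn_eq0 eqn0Ngt p_gt0.
by rewrite add0r.
Qed.

(* Iterating Delta_W strips one component at a time: the ghost components of
   x are those of tghost c, where c_k is the 0-th component after k steps. *)
Lemma ghost_Dchain s (x : W A s.+1) : exists c,
  (forall m, (m <= s)%N -> ghost (ext x) m = tghost c m) /\
  c s = Dchain p phi x ord0.
Proof.
elim: s x => [|s IH] x.
  by exists (fun _ => x ord0); split=> // m; rewrite leqn0 => /eqP ->;
     rewrite ghost0 tghost0 ext0.
have [c [ghost_c c_s]] := IH (DeltaW p phi x).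
exists (fun k => if k is k'.+1 then c k' else x ord0); split => // -[|m] le_ms.
  by rewrite ghost0 tghost0 ext0.
by rewrite tghost_recl /= -ghost_c // ghost_DeltaW // addrC subrK.
Qed.

Lemma tghost_Delta a m : tghost (fun k => Delta p phi k a) m = a ^+ (p ^ m).
Proof.
elim/ltn_ind: m => m IH.
have [c [ghost_c c_m]] := ghost_Dchain (teichn m.+1 a).
have tghost_c m' : (m' <= m)%N -> tghost c m' = a ^+ (p ^ m').
  by move=> le_m'm; rewrite -ghost_c // ghost_ext_tr // ghost_teich.
rewrite -tghost_c //; apply/esym/eq_tghost => k; rewrite leq_eqVlt.
case/predU1P => [-> | lt_km]; first by rewrite c_m.
apply: (@tghost_inj m c (fun k => Delta p phi k a) _ k lt_km) => m' lt_m'm.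
by rewrite IH // tghost_c // ltnW.
Qed.

Lemma Delta0 a : Delta p phi 0 a = a.
Proof. by have := tghost_Delta a 0; rewrite tghost0 expn0 expr1. Qed.

Definition psi f j := \sum_(i < j.+1) Delta p phi (j - i) (f i).

Lemma psi0 f : psi f 0 = f 0%N.
Proof. by rewrite /psi big_ord1 Delta0. Qed.

Lemma psi_recl f j :
  psi f j.+1 = Delta p phi j.+1 (f 0%N) + psi (fun i => f i.+1) j.
Proof. by rewrite /psi big_ord_recl subn0. Qed.

Lemma ghost_tghost_psi f m : ghost f m = tghost (psi f) m.
Proof.
elim: m f => [|m IH] f; first by rewrite ghost0 tghost0 psi0.
have := tghost_Delta (f 0%N) m.+1; rewrite tghost_recl Delta0 => Delta_f0.
rewrite ghost_recl IH -Delta_f0 tghost_recl psi0 -addrA -mulrDr -tghostD.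
by congr (_ + _ * _); apply: eq_tghost => k _; rewrite psi_recl.
Qed.

Lemma PsiE n (x : W A n) (j : 'I_n) : Psi p phi x j = psi (ext x) j.
Proof. by rewrite ffunE. Qed.

Lemma ghost_Psi n (x : W A n) m :
  (m < n)%N -> ghost (ext x) m = tghost (ext (Psi p phi x)) m.
Proof.
move=> lt_mn; rewrite ghost_tghost_psi; apply: eq_tghost => k le_km.
by rewrite (extE _ (leq_ltn_trans le_km lt_mn)) PsiE.
Qed.

Lemma ffun_tghost_inj n (b b' : {ffun 'I_n -> A}) :
  (forall m, (m < n)%N -> tghost (ext b) m = tghost (ext b') m) -> b = b'.
Proof. by move=> eqb; apply/ffunP => j; rewrite -!ext_ord (tghost_inj eqb). Qed.

Lemma Psi_add n (x y : W A n) :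
  Psi p phi (waddn p x y) = Psi p phi x + Psi p phi y.
Proof.
apply: ffun_tghost_inj => m lt_mn.
rewrite -ghost_Psi // /waddn ghost_ext_tr // ghost_wadd !ghost_Psi // -tghostD.
apply: eq_tghost => k le_km; have lt_kn := leq_ltn_trans le_km lt_mn.
by rewrite !(extE _ lt_kn) [RHS]ffunE.
Qed.

Lemma Psi_scale n a (x : W A n) :
  Psi p phi (wmuln p (sphin p phi n a) x)
    = [ffun j : 'I_n => iter j phi a * Psi p phi x j].
Proof.
apply: ffun_tghost_inj => m lt_mn.
rewrite -ghost_Psi // /wmuln ghost_ext_tr // ghost_wmul /sphin ghost_ext_tr //.
rewrite ghost_sphi ghost_Psi // -tghost_scale.
apply: eq_tghost => k le_km; have lt_kn := leq_ltn_trans le_km lt_mn.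
by rewrite !(extE _ lt_kn) [RHS]ffunE.
Qed.

Lemma Psi_inj n : injective (Psi p phi (n:=n)).
Proof.
move=> x y eqPsi; apply/ffunP => i; rewrite -!ext_ord.
by apply: (ghost_inj _ (ltn_ord i)) => m lt_mn; rewrite !ghost_Psi // eqPsi.
Qed.

Definition Psi_inv n (b : {ffun 'I_n -> A}) : W A n :=
  tr n (from_ghost p (tghost (ext b))).

Lemma Psi_invK n : cancel (@Psi_inv n) (Psi p phi (n:=n)).
Proof.
move=> b; apply: ffun_tghost_inj => m lt_mn.
by rewrite -ghost_Psi // ghost_ext_tr // ghost_from_ghost //; apply: dwork_tghost.
Qed.

End PsiIsomorphism.

Theorem theorem3p7 (A : comPzRingType) (p : nat) (phi : {rmorphism A -> A})
    (n : nat) :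
  prime p ->
  (forall a : A, p%:R * a = 0 -> a = 0) ->
  (forall a : A, exists b : A, phi a - a ^+ p = p%:R * b) ->
  (0 < n)%N ->
  [/\ (forall x y : W A n,
         Psi p phi (waddn p x y) = Psi p phi x + Psi p phi y),
      (forall (a : A) (x : W A n),
         Psi p phi (wmuln p (sphin p phi n a) x)
           = [ffun j : 'I_n => iter j phi a * Psi p phi x j])
    & bijective (Psi p phi (n:=n))].
Proof.
move=> /prime_gt0 p_gt0 p_torsionfree phi_frobenius _.
have Psi_invK' := Psi_invK p_gt0 p_torsionfree phi_frobenius (n:=n).
split; [exact: Psi_add | exact: Psi_scale |].
exists (Psi_inv p phi (n:=n)) => // x.
by apply: (Psi_inj p_gt0 p_torsionfree phi_frobenius); rewrite Psi_invK'.
Qed.
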